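(* Let $\mathfrak g$ be a complex semisimple Lie algebra, $\mathfrak h \subset \mathfrak g$ a Cartan subalgebra, and $\rho : \mathfrak g \to \mathrm{End}(W)$ a finite-dimensional representation. Then $W \otimes \mathfrak g$ is generated, as a $\mathfrak g$-module, by $W \otimes \mathfrak h$.
   Context: $W \otimes \mathfrak g$ is a $\mathfrak g$-module via $(\rho\otimes \mathrm{ad})(\xi)(w\otimes \eta) = \rho(\xi)w \otimes \eta + w \otimes [\xi,\eta]$. *)

From HB Require Import structures.
From mathcomp Require Import all_boot all_order all_algebra.
From mathcomp Require Import complex.
From mathcomp Require Import reals.
Set Implicit Arguments. Unset Strict Implicit. Unset Printing Implicit Defensive.
Import Order.TTheory GRing.Theory Num.Theory.
Local Open Scope ring_scope.


Section Lie.
Variables (F : fieldType) (g : vectType F) (br : g -> g -> g).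

Definition lie_bracket : Prop :=
  [/\ forall a x y z, br (a *: x + y) z = a *: br x z + br y z,
      forall a x y z, br z (a *: x + y) = a *: br z x + br z y,
      forall x, br x x = 0 &
      forall x y z, br x (br y z) + br y (br z x) + br z (br x y) = 0].

(* [U, V] : the subspace spanned by all brackets [u, v], u in U, v in V
   (by bilinearity, spanned by brackets of basis vectors) *)
Definition brsp (U V : {vspace g}) : {vspace g} :=
  (<<[seq br u v | u <- vbasis U, v <- vbasis V]>>)%VS.

Definition lie_subalgebra (h : {vspace g}) : Prop :=
  forall x y, x \in h -> y \in h -> br x y \in h.

Definition lie_ideal (I : {vspace g}) : Prop :=
  forall x y, y \in I -> br x y \in I.

Definition derived_series (I : {vspace g}) (n : nat) : {vspace g} :=
  iter n (fun J => brsp J J) I.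

Definition lie_solvable (I : {vspace g}) : Prop :=
  exists n, derived_series I n = 0%VS.

Definition lower_central_series (h : {vspace g}) (n : nat) : {vspace g} :=
  iter n (fun J => brsp h J) h.

Definition lie_nilpotent (h : {vspace g}) : Prop :=
  exists n, lower_central_series h n = 0%VS.

Definition lie_semisimple : Prop :=
  forall I, lie_ideal I -> lie_solvable I -> I = 0%VS.

Definition cartan_subalgebra (h : {vspace g}) : Prop :=
  [/\ lie_subalgebra h, lie_nilpotent h &
      forall x, (forall y, y \in h -> br x y \in h) -> x \in h].

Definition lie_rep (W : vectType F) (rho : g -> 'End(W)) : Prop :=
  (forall a x y, rho (a *: x + y) = a *: rho x + rho y) /\
  (forall x y, rho (br x y) = (rho x \o rho y - rho y \o rho x)%VF).

(* The tensor product W (x) g, realized as matrices of coordinates with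
   respect to the fixed bases vbasis {:W}%VS and vbasis {:g}%VS;
   tens w x is the pure tensor w (x) x. *)
Definition tensWg (W : vectType F) := 'M[F]_(\dim {:W}%VS, \dim {:g}%VS).

Definition tens (W : vectType F) (w : W) (x : g) : tensWg W :=
  \matrix_(i, j) (coord (vbasis {:W}%VS) i w * coord (vbasis {:g}%VS) j x).

(* (rho (x) ad)(xi), the unique linear map on W (x) g with
   w (x) eta |-> rho(xi) w (x) eta + w (x) [xi, eta],
   defined by linear extension from the basis tensors. *)
Definition tens_act (W : vectType F) (rho : g -> 'End(W)) (xi : g)
    (M : tensWg W) : tensWg W :=
  \sum_(i < \dim {:W}%VS) \sum_(j < \dim {:g}%VS)
     M i j *: (tens (rho xi (tnth (vbasis {:W}%VS) i)) (tnth (vbasis {:g}%VS) j)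
               + tens (tnth (vbasis {:W}%VS) i) (br xi (tnth (vbasis {:g}%VS) j))).

End Lie.

Definition generates_module (F : fieldType) (g M : vectType F)
    (act : g -> M -> M) (S : M -> Prop) : Prop :=
  forall U : {vspace M},
    (forall m, S m -> m \in U) ->
    (forall xi m, m \in U -> act xi m \in U) ->
    U = fullv.

From HB Require Import structures.
From mathcomp Require Import all_boot all_order all_algebra.
From mathcomp Require Import complex.
From mathcomp Require Import reals.
From mathcomp Require Import zify.

(* For any Cartan subalgebra h of a finite-dimensional Lie algebra g over a
   field, g = h + [h, g]; and since w (x) [xi, eta] = xi.(w (x) eta) -
   rho(xi) w (x) eta, a submodule containing W (x) h contains W (x) [h, g],
   hence all of W (x) g.
   For g = h + [h, g], decompose g successively into Fitting components with
   respect to ad c, c running through bases of the terms of the lower central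
   series of h.  Since h is nilpotent, the Fitting null spaces are h-stable,
   and this yields an h-stable N with g = N + [h, g] on which all these ad c
   are nilpotent.  If N were not contained in h, an Engel-type descent along
   the lower central series would produce v outside h with [h, v] in h,
   contradicting that h is self-normalizing. *)

Set Implicit Arguments. Unset Strict Implicit. Unset Printing Implicit Defensive.
Import GRing.Theory.
Local Open Scope ring_scope.

Section IterAdditive.
Variables (V : zmodType) (f : {additive V -> V}).

Lemma iter_raddf0 k : iter k f 0 = 0.
Proof. by elim: k => // k IH; rewrite iterS IH raddf0. Qed.

Lemma iter_raddfD k : {morph iter k f : u v / u + v}.
Proof. by elim: k => // k IH u v; rewrite !iterS IH raddfD. Qed.

Lemma iter_raddfB k : {morph iter k f : u v / u - v}.
Proof. by elim: k => // k IH u v; rewrite !iterS IH raddfB. Qed.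

End IterAdditive.

Lemma stationary_from (T : eqType) (A : nat -> T) (mu : nat -> nat) b :
  (forall k, mu k <= b)%N ->
  (forall k, A k != A k.+1 -> mu k < mu k.+1)%N ->
  (forall k, A k = A k.+1 -> A k.+1 = A k.+2) ->
  forall i, (b <= i)%N -> A i = A b.
Proof.
move=> mu_le mu_lt step.
have [k kb Ak] : exists2 k, (k <= b)%N & A k = A k.+1.
  have [/existsP [k /eqP Ak]|/existsPn moving] := boolP [exists k : 'I_b.+1, A k == A k.+1].
    by exists k; first rewrite -ltnS.
  have grow j : (j <= b.+1 -> j <= mu j)%N.
    elim: j => // j IH jb; apply: leq_ltn_trans (IH (ltnW jb)) (mu_lt j _).
    exact: (moving (Ordinal jb)).
  by have := leq_trans (grow _ (leqnn _)) (mu_le b.+1); rewrite ltnn.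
have from_k j : A (k + j)%N = A k.
  have still i : A (k + i)%N = A (k + i).+1.
    by elim: i => [|i IH]; rewrite ?addn0 // addnS; apply: step.
  by elim: j => [|j IH]; rewrite ?addn0 // addnS -still.
by move=> i bi; rewrite -(subnKC (leq_trans kb bi)) -(subnKC kb) !from_k.
Qed.

Section Fitting.
Variables (K : fieldType) (V : vectType K) (T : 'End(V)).
(* One more than needed, so that [iter n T] factors through [T]. *)
Local Notation n := (\dim {:V}).+1.

Lemma ltn_dimv (U W : {vspace V}) : (U <= W)%VS -> U != W -> (\dim U < \dim W)%N.
Proof. by move=> UW; rewrite ltnNge; apply: contra => WU; rewrite eqEdim UW. Qed.

Definition lker_iter k : {vspace V} := iter k (fun U => T @^-1: U)%VS 0%VS.

Lemma mem_lker_iter k v : (v \in lker_iter k) = (iter k T v == 0).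
Proof.
elim: k v => [|k IH] v /=; first by rewrite memv0.
by rewrite -memv_preim IH -iterSr.
Qed.

Lemma iter_eq0_stable i v : (n <= i)%N -> iter i T v = 0 -> iter n T v = 0.
Proof.
have incr k : (lker_iter k <= lker_iter k.+1)%VS.
  by apply/subvP => w; rewrite !mem_lker_iter iterS => /eqP ->; rewrite linear0.
have stat : forall j, (\dim {:V} <= j)%N -> lker_iter j = lker_iter (\dim {:V}).
  apply: (stationary_from (mu := fun k => \dim (lker_iter k))) => [k|k|k Ak].
  - exact/dimvS/subvf.
  - exact: ltn_dimv.
  - by change (T @^-1: lker_iter k = T @^-1: lker_iter k.+1)%VS; rewrite Ak.
move=> ni /eqP; rewrite -mem_lker_iter => vi; apply/eqP.
by rewrite -mem_lker_iter stat // -(stat i) // (leq_trans _ ni).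
Qed.

Lemma fitting_decomposition (U : {vspace V}) v : (T @: U <= U)%VS -> v \in U ->
  exists v0, [/\ v0 \in U, iter n T v0 = 0 & v - v0 \in limg T].
Proof.
move=> TU vU; pose A k := iter k (fun X => T @: X)%VS U.
have decr k : (A k.+1 <= A k)%VS by elim: k => //= k IH; apply: limgS.
have stat : forall j, (\dim {:V} <= j)%N -> A j = A (\dim {:V}).
  apply: (stationary_from (mu := fun k => \dim {:V} - \dim (A k))%N) => [k|k|k Ak].
  - exact: leq_subr.
  - rewrite eq_sym => /(ltn_dimv (decr k)) ltA; have := dimvS (subvf (A k)); lia.
  - by change (T @: A k = T @: A k.+1)%VS; rewrite Ak.
have iterU k u : u \in U -> iter k T u \in U.
  by move=> uU; elim: k => //= k IH; apply: (subvP TU); apply: memv_img.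
have memA k w : w \in A k -> exists2 u, u \in U & w = iter k T u.
  elim: k w => [|k IH] w /=; first by exists w.
  by case/memv_imgP => _ /IH [u uU ->] ->; exists u.
have iterA k : iter k T v \in A k by elim: k => //= k IH; apply: memv_img.
have [u uU Tv] : exists2 u, u \in U & iter n T v = iter n T (iter n T u).
  have := iterA n; rewrite stat // -(stat (n + n)) ?(leq_trans _ (leq_addr _ _)) //.
  by case/memA => u uU ->; exists u; rewrite // iterD.
exists (v - iter n T u); split; first by rewrite memvB ?iterU.
  by rewrite iter_raddfB Tv subrr.
by rewrite subKr iterS; apply/memv_img/memvf.
Qed.

End Fitting.

Section CommonNullVector.
Variables (K : fieldType) (V : vectType K) (U : {vspace V}).
Variables (I : eqType) (act : I -> V -> V).

Lemma null_vector_of_nilpotent i (P : V -> Prop) :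
  (forall v, P v -> P (act i v)) ->
  forall d v, P v -> v \notin U -> iter d (act i) v \in U ->
  exists w, [/\ P w, w \notin U & act i w \in U].
Proof.
move=> Pact; elim=> [|d IH] v Pv vU; first by rewrite /= (negPf vU).
have [ivU _|ivU] := boolP (act i v \in U); first by exists v.
by rewrite iterSr; apply: IH (Pact _ Pv) ivU.
Qed.

Lemma common_null_vector (s : seq I) (P : V -> Prop) :
  (forall i u, i \in s -> u \in U -> act i u \in U) ->
  (forall i v, i \in s -> P v -> P (act i v)) ->
  (forall i v, i \in s -> P v -> exists d, iter d (act i) v \in U) ->
  (forall i j v, i \in s -> j \in s -> P v -> act i (act j v) - act j (act i v) \in U) ->
  (exists2 v, P v & v \notin U) ->
  exists v, [/\ P v, v \notin U & forall i, i \in s -> act i v \in U].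
Proof.
elim: s P => [|i s IH] P actU Pact Pnil Pcomm [v0 Pv0 v0U]; first by exists v0.
have i_s : i \in i :: s := mem_head i s.
have sub j : j \in s -> j \in i :: s by move=> js; rewrite inE js orbT.
have [d Hd] := Pnil i v0 i_s Pv0.
have [w [Pw wU iw]] := null_vector_of_nilpotent (fun v => Pact i v i_s) Pv0 v0U Hd.
have [v [[Pv iv] vU sv]] : exists v, [/\ P v /\ act i v \in U, v \notin U &
    forall j, j \in s -> act j v \in U].
  apply: IH => [j u /sub|j v js [Pv iv]|j v js [Pv _]|j k v js ks [Pv _]|].
  - exact: actU.
  - split; first exact: Pact (sub _ js) Pv.
    rewrite -[act i _](subrK (act j (act i v))); apply: memvD.
      exact: Pcomm i_s (sub _ js) Pv.
    exact: actU (sub _ js) iv.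
  - exact: Pnil (sub _ js) Pv.
  - exact: Pcomm (sub _ js) (sub _ ks) Pv.
  - by exists w.
by exists v; split=> // j; rewrite inE => /predU1P [->|/sv].
Qed.

End CommonNullVector.

Section LieBracket.
Variables (F : fieldType) (g : vectType F) (br : g -> g -> g).
Hypothesis br_lie : lie_bracket br.

Lemma br_bilinear : bilinear_for *:%R *:%R br.
Proof. by have [brl brr _ _] := br_lie; split=> u a x y; [apply: brl|apply: brr]. Qed.

HB.instance Definition _ :=
  bilinear_isBilinear.Build F g g g *:%R *:%R br br_bilinear.
HB.instance Definition _ x :=
  GRing.isLinear.Build F g g *:%R (br x) (br_bilinear.2 x).

Lemma br_anti x y : br x y = - br y x.
Proof.
have [_ _ brxx _] := br_lie; apply/eqP; rewrite -addr_eq0.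
by have := brxx (x + y); rewrite linearDl !linearDr /= !brxx add0r addr0 => ->.
Qed.

Lemma br_leibniz x y z : br x (br y z) = br (br x y) z + br y (br x z).
Proof.
have [_ _ _ jacobi] := br_lie; have := jacobi x y z.
rewrite (br_anti z x) (br_anti z (br x y)) linearN /= => /eqP.
by rewrite -addrA -opprD subr_eq0 addrC => /eqP.
Qed.

Lemma iter_br_br_eq0 x y z a k :
  iter k (br x) y = 0 -> iter a (br x) z = 0 -> iter (a + k) (br x) (br y z) = 0.
Proof.
elim: a y z k => [|a IHa] y z k Hy; first by move=> /= ->; rewrite linear0 iter_raddf0.
elim: k y Hy z => [|k IHk] y Hy z Hz.
  by rewrite /= in Hy; rewrite Hy linear0l iter_raddf0.
have Hxy : iter k (br x) (br x y) = 0 by rewrite -iterSr.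
have Hxz : iter a (br x) (br x z) = 0 by rewrite -iterSr.
rewrite addnS iterSr br_leibniz iter_raddfD (IHk _ Hxy _ Hz) add0r addSnnS.
exact: IHa.
Qed.

Lemma memv_brsp (U V : {vspace g}) u v :
  u \in U -> v \in V -> br u v \in brsp br U V.
Proof.
move=> uU vV; rewrite (coord_vbasis uU) (coord_vbasis vV) linear_sumlz.
apply: memv_suml => i _; rewrite linearZl linear_sum; apply: memvZ.
apply: memv_suml => j _; rewrite linearZ; apply/memvZ/memv_span.
by apply: allpairs_f; apply: mem_nth; rewrite size_tuple.
Qed.

Lemma brsp_subv (U V X : {vspace g}) :
  (forall u v, u \in U -> v \in V -> br u v \in X) -> (brsp br U V <= X)%VS.
Proof.
move=> UVX; apply/span_subvP => _ /allpairsP [[u v] [/= uU vV ->]].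
by apply: UVX; apply: vbasis_mem.
Qed.

Lemma br_vbasisl_mem (U X : {vspace g}) v :
  (forall c, c \in vbasis U -> br c v \in X) -> forall c, c \in U -> br c v \in X.
Proof.
move=> UX c cU; rewrite (coord_vbasis cU) linear_sumlz; apply: memv_suml => i _.
by rewrite linearZl; apply/memvZ/UX/mem_nth; rewrite size_tuple.
Qed.

Definition ad x : 'End(g) := linfun (br x).

Lemma iter_adE x k v : iter k (ad x) v = iter k (br x) v.
Proof. by elim: k => //= k ->; rewrite lfunE. Qed.

Section LowerCentralSeries.
Variable h : {vspace g}.
Local Notation lcs := (lower_central_series br h).

Lemma iter_br_lcs x y n k :
  x \in h -> y \in lcs n -> iter k (br x) y \in lcs (k + n).
Proof. by move=> xh yl; elim: k => //= k IH; apply: memv_brsp. Qed.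

Lemma lie_nilpotent_iter_br : lie_nilpotent br h ->
  exists m, forall x y, x \in h -> y \in h -> iter m (br x) y = 0.
Proof.
move=> [m lcs_m]; exists m => x y xh yh; apply/eqP.
by have := iter_br_lcs m xh (yh : y \in lcs 0); rewrite addn0 lcs_m memv0.
Qed.

Hypothesis h_sub : lie_subalgebra br h.

Lemma lcs_sub n : (lcs n <= h)%VS.
Proof.
elim: n => [|n IH] /=; first exact: subvv.
by apply: brsp_subv => u v uh /(subvP IH); apply: h_sub.
Qed.

Lemma lcsSn n : (lcs n.+1 <= lcs n)%VS.
Proof.
elim: n => [|n IH]; first exact: lcs_sub.
by apply: brsp_subv => u v uh /(subvP IH); apply: memv_brsp.
Qed.

End LowerCentralSeries.

Section SimultaneousFitting.
Variable h : {vspace g}.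
Hypothesis h_nil : lie_nilpotent br h.
Local Notation n := (\dim {:g}).+1.

Lemma iter_br_stable c y v :
  c \in h -> y \in h -> iter n (br c) v = 0 -> iter n (br c) (br y v) = 0.
Proof.
move=> ch yh cv; have [m hm] := lie_nilpotent_iter_br h_nil.
rewrite -iter_adE; apply: (iter_eq0_stable (leq_addr m n)).
by rewrite iter_adE iter_br_br_eq0 ?hm.
Qed.

Lemma simultaneous_fitting (L : seq g) (V : {vspace g}) :
  {subset L <= h} -> (brsp br h V <= V)%VS ->
  exists N : {vspace g}, [/\ (N <= V)%VS, (brsp br h N <= N)%VS,
    forall c v, c \in L -> v \in N -> iter n (br c) v = 0 &
    (V <= N + brsp br h fullv)%VS].
Proof.
elim: L V => [|c L IH] V Lh hV; first by exists V; split=> //; apply: addvSl.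
have ch : c \in h := Lh c (mem_head c L).
pose V0 := (V :&: lker_iter (ad c) n)%VS.
have hV0 : (brsp br h V0 <= V0)%VS.
  apply: brsp_subv => y v yh; rewrite !memv_cap !mem_lker_iter !iter_adE.
  by case/andP=> vV /eqP cv; rewrite (subvP hV) ?memv_brsp // andTb iter_br_stable.
have Lh' : {subset L <= h} by move=> d dL; apply: Lh; rewrite inE dL orbT.
have [N [NV0 hN LN V0N]] := IH V0 Lh' hV0.
exists N; split=> //.
- exact: subv_trans NV0 (capvSl _ _).
- move=> d v; rewrite inE => /predU1P [-> vN|]; last exact: LN.
  by have := subvP NV0 v vN; rewrite memv_cap mem_lker_iter iter_adE => /andP [_ /eqP].
apply/subvP => v vV.
have adV : (ad c @: V <= V)%VS.
  by apply/subvP => _ /memv_imgP [u uV ->]; rewrite lfunE (subvP hV) ?memv_brsp.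
have [v0 [v0V cv0 vv0]] := fitting_decomposition adV vV.
rewrite -(subrK v0 v); apply: memvD.
  case/memv_imgP: vv0 => u _ ->; rewrite lfunE.
  by apply: (subvP (addvSr _ _)); apply: memv_brsp ch (memvf u).
by apply: (subvP V0N); rewrite memv_cap v0V mem_lker_iter; apply/eqP.
Qed.

End SimultaneousFitting.

Section Cartan.
Variable h : {vspace g}.
Hypothesis h_sub : lie_subalgebra br h.
Hypothesis h_norm : forall x, (forall y, y \in h -> br x y \in h) -> x \in h.
Local Notation lcs := (lower_central_series br h).

Lemma lcs_normalizer_step (N : {vspace g}) j :
  (brsp br h N <= N)%VS ->
  (forall c v, c \in vbasis (lcs j) -> v \in N -> exists d, iter d (br c) v = 0) ->
  (exists v, [/\ v \in N, v \notin h & forall c, c \in lcs j.+1 -> br c v \in h]) ->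
  exists v, [/\ v \in N, v \notin h & forall c, c \in lcs j -> br c v \in h].
Proof.
move=> hN Lnil [v0 [v0N v0h Lv0]].
have Lh c : c \in vbasis (lcs j) -> c \in h.
  by move/vbasis_mem; apply: (subvP (lcs_sub h_sub j)).
(* [lcs j, lcs j] lies in lcs j.+1, which maps the vectors considered into h:
   the ad c, c in lcs j, commute modulo h on them. *)
have [v [[vN _] vh Lv]] : exists v, [/\ v \in N /\ (forall c, c \in lcs j.+1 -> br c v \in h),
    v \notin h & forall c, c \in vbasis (lcs j) -> br c v \in h].
  apply: common_null_vector => [c u /Lh|c v cL [vN Lv]|c v cL [vN _]|c c' v cL c'L [vN Lv]|].
  - exact: h_sub.
  - split=> [|c' c'L]; first by rewrite (subvP hN) ?memv_brsp ?Lh.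
    rewrite br_leibniz; apply: memvD; last exact: h_sub (Lh _ cL) (Lv _ c'L).
    rewrite (br_anti c') linearNl memvN; apply/Lv/(subvP (lcsSn h_sub j.+1)).
    exact: memv_brsp (Lh _ cL) c'L.
  - by have [d cd] := Lnil c v cL vN; exists d; rewrite cd mem0v.
  - by rewrite br_leibniz addrK; apply/Lv/memv_brsp; [apply: Lh | apply: vbasis_mem].
  - by exists v0.
by exists v; split=> //; apply: br_vbasisl_mem.
Qed.

Lemma nilpotent_submodule_subv (N : {vspace g}) m : lcs m = 0%VS -> (brsp br h N <= N)%VS ->
  (forall j c v, (j < m)%N -> c \in vbasis (lcs j) -> v \in N ->
     exists d, iter d (br c) v = 0) ->
  (N <= h)%VS.
Proof.
move=> lcs_m hN Lnil; apply/subvP => v0 v0N; apply/negPn/negP => v0h.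
have descent k : (k <= m)%N ->
    exists v, [/\ v \in N, v \notin h & forall c, c \in lcs (m - k) -> br c v \in h].
  elim: k => [|k IH] km.
    by exists v0; split=> // c; rewrite subn0 lcs_m memv0 => /eqP ->; rewrite linear0l mem0v.
  have Ej : (m - k = (m - k.+1).+1)%N by lia.
  apply: (lcs_normalizer_step hN) => [c v cL vN|]; first by apply: (Lnil _ c v _ cL vN); lia.
  by rewrite -Ej; apply: IH; apply: ltnW.
have [v [_ vh hv]] := descent m (leqnn m); rewrite subnn in hv.
by move: vh; rewrite h_norm // => y yh; rewrite br_anti memvN hv.
Qed.

Theorem cartan_add_brsp : lie_nilpotent br h -> (h + brsp br h fullv)%VS = fullv.
Proof.
move=> h_nil; have [m lcs_m] := h_nil.
pose L := flatten [seq (vbasis (lcs j) : seq g) | j <- iota 0 m].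
have Lh : {subset L <= h}.
  by move=> c /flatten_mapP [j _ /vbasis_mem]; apply: (subvP (lcs_sub h_sub j)).
have [N [_ hN LN gN]] := simultaneous_fitting h_nil Lh (subvf (brsp br h fullv)).
apply/eqP; rewrite eqEsubv subvf /=; apply: subv_trans gN _; apply: addvS => //.
apply: (nilpotent_submodule_subv lcs_m hN) => j c v jm cj vN; exists (\dim {:g}).+1.
by apply: LN vN; apply/flatten_mapP; exists j; rewrite ?mem_iota.
Qed.

End Cartan.

End LieBracket.

Section BilinearExpansion.
Variables (R : nzRingType) (U U' M : lmodType R) (f : {bilinear U -> U' -> M}).

Lemma bilinear_sumZ m n (a : 'I_m -> R) (x : 'I_m -> U) (b : 'I_n -> R) (y : 'I_n -> U') :
  f (\sum_i a i *: x i) (\sum_j b j *: y j) = \sum_i \sum_j (a i * b j) *: f (x i) (y j).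
Proof.
rewrite linear_sumlz; apply: eq_bigr => i _.
rewrite linearZl linear_sum /= scaler_sumr; apply: eq_bigr => j _.
by rewrite linearZ scalerA.
Qed.

End BilinearExpansion.

Section TensorModule.
Variables (F : fieldType) (g W : vectType F).
Local Notation bW := (vbasis {:W}%VS).
Local Notation bg := (vbasis {:g}%VS).

Lemma tens_bilinear : bilinear_for *:%R *:%R (@tens F g W).
Proof.
split=> [x a u v|w a x y]; apply/matrixP => i j; rewrite !mxE linearP /=.
  by rewrite mulrDl mulrA.
by rewrite mulrDr mulrCA.
Qed.

HB.instance Definition _ :=
  bilinear_isBilinear.Build F W g _ *:%R *:%R (@tens F g W) tens_bilinear.
HB.instance Definition _ w :=
  GRing.isLinear.Build F g _ *:%R (@tens F g W w) (tens_bilinear.2 w).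

Lemma tens_vbasis_delta (i : 'I_(\dim {:W})) (j : 'I_(\dim {:g})) :
  tens bW`_i bg`_j = delta_mx i j.
Proof.
apply/matrixP => k l; rewrite !mxE !coord_free ?(basis_free (vbasisP _)) //.
by rewrite (eq_sym k) (eq_sym l); case: (i == k); case: (j == l); rewrite ?mulr1 ?mulr0.
Qed.

Variables (br : g -> g -> g) (rho : g -> 'End(W)).
Hypothesis br_lie : lie_bracket br.

HB.instance Definition _ x :=
  GRing.isLinear.Build F g g *:%R (br x) ((br_bilinear br_lie).2 x).

Lemma tens_actE xi w eta :
  tens_act br rho xi (tens w eta) = tens (rho xi w) eta + tens w (br xi eta).
Proof.
have [Ew Eeta] := (coord_vbasis (memvf w), coord_vbasis (memvf eta)).
have Erho : rho xi w = \sum_i coord bW i w *: rho xi bW`_i.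
  by rewrite {1}Ew linear_sum; apply: eq_bigr => i _; rewrite linearZ.
have Ebr : br xi eta = \sum_j coord bg j eta *: br xi bg`_j.
  by rewrite {1}Eeta linear_sum; apply: eq_bigr => j _; rewrite linearZ.
have E1 : tens (rho xi w) eta =
    \sum_i \sum_j (coord bW i w * coord bg j eta) *: tens (rho xi bW`_i) bg`_j.
  by rewrite Erho {1}Eeta bilinear_sumZ.
have E2 : tens w (br xi eta) =
    \sum_i \sum_j (coord bW i w * coord bg j eta) *: tens bW`_i (br xi bg`_j).
  by rewrite Ebr {1}Ew bilinear_sumZ.
rewrite E1 E2 /tens_act -big_split.
apply: eq_bigr => i _; rewrite -big_split; apply: eq_bigr => j _.
by rewrite mxE scalerDr !(tnth_nth 0).
Qed.

Lemma generates_tens_of_add_brsp (h : {vspace g}) :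
  (h + brsp br h fullv)%VS = fullv ->
  generates_module (tens_act br rho)
    (fun m => exists (w : W) (eta : g), eta \in h /\ m = tens w eta).
Proof.
move=> hB U hU actU.
have tens_br_h w xi eta : eta \in h -> tens w (br xi eta) \in U.
  move=> etah; rewrite -[tens w _](addKr (tens (rho xi w) eta)) -tens_actE.
  apply: memvD; first by rewrite memvN; apply: hU; exists (rho xi w), eta.
  by apply/actU/hU; exists w, eta.
have tens_U w eta : tens w eta \in U.
  suff: (h + brsp br h fullv <= linfun (tens w) @^-1: U)%VS.
    by rewrite hB => /subvP /(_ eta (memvf eta)); rewrite -memv_preim lfunE.
  rewrite subv_add; apply/andP; split.
    by apply/subvP => x xh; rewrite -memv_preim lfunE; apply: hU; exists w, x.
  apply: brsp_subv => x y xh _.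
  by rewrite -memv_preim lfunE (br_anti br_lie) linearN memvN tens_br_h.
apply/vspaceP => M; rewrite memvf (matrix_sum_delta M).
apply: memv_suml => i _; apply: memv_suml => j _.
by apply: memvZ; rewrite -tens_vbasis_delta.
Qed.

End TensorModule.

Theorem lemma3p8 (R : realType) (g : vectType R[i]) (br : g -> g -> g)
    (h : {vspace g}) (W : vectType R[i]) (rho : g -> 'End(W)) :
  lie_bracket br -> lie_semisimple br -> cartan_subalgebra br h ->
  lie_rep br rho ->
  generates_module (tens_act br rho)
    (fun m => exists (w : W) (eta : g), eta \in h /\ m = tens w eta).
Proof.
move=> br_lie _ [h_sub h_nil h_norm] _.
exact/(generates_tens_of_add_brsp br_lie)/(cartan_add_brsp br_lie h_sub h_norm h_nil).
Qed.
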